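(* Let $M, K, P, N$ be positive integers with $M < K \le P$ and such that $P$ divides $N$. Let $\mathbf{a}_1^T, \ldots, \mathbf{a}_M^T \in \mathbb{R}^{1\times N}$ be arbitrary row vectors. Then there exists a matrix $\mathbf{F} \in \mathbb{R}^{P \times N}$ such that: (i) for every set $\chi \subseteq \{1,\ldots,P\}$ with $|\chi| = K$, each of $\mathbf{a}_1^T, \ldots, \mathbf{a}_M^T$ is a linear combination of the rows of $\mathbf{F}$ indexed by $\chi$; and (ii) every row of $\mathbf{F}$ has sparsity at most $s = \frac{N}{P}(P-K+M)$.
   Context: The sparsity of a vector $\mathbf{u} \in \mathbb{R}^N$ is its number of nonzero entries, $\|\mathbf{u}\|_0 = \#\{j : u_j \neq 0\}$. *)

From mathcomp Require Import all_boot all_order all_algebra.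
Set Implicit Arguments. Unset Strict Implicit. Unset Printing Implicit Defensive.
Import Order.TTheory GRing.Theory Num.Theory.
Local Open Scope ring_scope.

Definition sparsity (R : ringType) (N : nat) (u : 'rV[R]_N) : nat :=
  #|[set j : 'I_N | u 0 j != 0]|.

Definition in_row_span (R : ringType) (P N : nat) (F : 'M[R]_(P, N))
  (chi : {set 'I_P}) (v : 'rV[R]_N) : Prop :=
  exists c : 'I_P -> R, v = \sum_(i in chi) c i *: row i F.

From mathcomp Require Import all_boot all_order all_algebra.
From mathcomp Require Import zify.
Set Implicit Arguments. Unset Strict Implicit. Unset Printing Implicit Defensive.
Import Order.TTheory GRing.Theory Num.Theory.
Local Open Scope ring_scope.

(* Give column n the cyclic window T n of K - M rows starting at its residue
   class n mod P, so that each row lies in the windows of exactly K - M of the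
   P classes.  Fix P + M distinct nodes; column n of F lists, at the first P
   nodes, the values of the polynomial of degree < K that vanishes at the
   nodes of T n and takes the values a_1 n, ..., a_M n at the last M nodes.
   Any K rows determine that polynomial by Lagrange interpolation, with
   weights independent of n, so each a_m is a combination of those rows; and
   row i vanishes on the columns of the K - M classes whose window contains
   it, leaving at most (N/P)(P - K + M) nonzero entries. *)

Section LagrangeOnSubsets.
Variables (R : fieldType) (I : finType) (x : I -> R).
Hypothesis x_inj : injective x.

Definition lagrange_on (S : {set I}) (i : I) : {poly R} :=
  let p := \prod_(j in S :\ i) ('X - (x j)%:P) in p.[x i]^-1 *: p.

Lemma lagrange_on_sample (S : {set I}) i k :
  k \in S -> (lagrange_on S i).[x k] = (i == k)%:R.
Proof.
move=> kS; rewrite /lagrange_on hornerZ !horner_prod.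
have [<-|nik] := eqVneq i k.
  rewrite mulVf //; apply/prodf_neq0 => j; rewrite !inE hornerXsubC subr_eq0.
  by case/andP; rewrite eq_sym inj_eq.
rewrite [X in _ * X](bigD1 k) ?inE 1?eq_sym ?nik //=.
by rewrite hornerXsubC subrr mul0r mulr0.
Qed.

Lemma size_lagrange_on (S : {set I}) i :
  i \in S -> (size (lagrange_on S i) <= #|S|)%N.
Proof.
move=> iS; apply: leq_trans (size_scale_leq _ _) _.
by rewrite -big_enum size_prod_XsubC -cardE (cardsD1 i S) iS.
Qed.

Definition interpolant (S : {set I}) (v : I -> R) : {poly R} :=
  \sum_(i in S) v i *: lagrange_on S i.

Lemma size_interpolant (S : {set I}) v : (size (interpolant S v) <= #|S|)%N.
Proof.
apply: leq_trans (size_sum _ _ _) _; apply/bigmax_leqP => i iS.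
by apply: leq_trans (size_scale_leq _ _) _; apply: size_lagrange_on.
Qed.

Lemma interpolant_sample (S : {set I}) v k :
  k \in S -> (interpolant S v).[x k] = v k.
Proof.
move=> kS; rewrite horner_sum (bigD1 k) //= big1 ?addr0.
  by rewrite hornerZ lagrange_on_sample // eqxx mulr1.
by move=> i /andP [_ nik]; rewrite hornerZ lagrange_on_sample // (negPf nik) mulr0.
Qed.

Lemma interpolantE (S : {set I}) (q : {poly R}) :
  (size q <= #|S|)%N -> interpolant S (fun i => q.[x i]) = q.
Proof.
move=> sq; apply/eqP; rewrite eq_sym -subr_eq0; apply/eqP.
apply: (@roots_geq_poly_eq0 _ _ [seq x k | k <- enum S]).
- apply/allP => y /mapP [k]; rewrite mem_enum => kS ->.
  by rewrite /root hornerD hornerN interpolant_sample // subrr.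
- by rewrite map_inj_uniq ?enum_uniq.
- rewrite size_map -cardE; apply: leq_trans (size_polyD _ _) _.
  by rewrite size_polyN geq_max sq size_interpolant.
Qed.

End LagrangeOnSubsets.

Lemma in_row_span_evaluations (R : fieldType) (P N : nat) (x : 'I_P -> R)
    (g : 'I_N -> {poly R}) (chi : {set 'I_P}) (t : R) :
  injective x -> (forall n, size (g n) <= #|chi|)%N ->
  in_row_span (\matrix_(i, n) (g n).[x i]) chi (\row_n (g n).[t]).
Proof.
move=> x_inj sg; exists (fun i => (lagrange_on x chi i).[t]).
apply/rowP => n; rewrite summxE mxE -(interpolantE x_inj (sg n)) horner_sum.
by apply: eq_bigr => i _; rewrite !mxE hornerZ mulrC.
Qed.

Section MaskedCode.
Variables (R : fieldType) (P M N : nat) (w : 'I_P + 'I_M -> R).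
Variables (T : 'I_N -> {set 'I_P}) (a : 'I_M -> 'rV[R]_N).
Hypothesis w_inj : injective w.

Definition masked_nodes (n : 'I_N) : {set 'I_P + 'I_M} :=
  inl @: T n :|: inr @: [set: 'I_M].

Definition masked_column (n : 'I_N) : {poly R} :=
  interpolant w (masked_nodes n) (fun k => if k is inr m then a m 0 n else 0).

Definition masked_code : 'M[R]_(P, N) :=
  \matrix_(i, n) (masked_column n).[w (inl i)].

Lemma masked_code_zero i n : i \in T n -> masked_code i n = 0.
Proof. by move=> iT; rewrite mxE interpolant_sample // inE imset_f. Qed.

Lemma in_row_span_masked_code (chi : {set 'I_P}) m :
  (forall n, #|T n| + M <= #|chi|)%N -> in_row_span masked_code chi (a m).
Proof.
move=> Tchi; have -> : a m = \row_n (masked_column n).[w (inr m)].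
  by apply/rowP => n; rewrite mxE interpolant_sample // !inE imset_f ?orbT.
apply: in_row_span_evaluations => [i j /w_inj [] //|n].
apply: leq_trans (size_interpolant _ _ _) (leq_trans (leq_card_setU _ _) _).
by rewrite !card_imset ?cardsT ?card_ord ?Tchi // => ? ? [].
Qed.

End MaskedCode.

Lemma leq_card_residues_in (p N : nat) (B : {set 'I_p.+1}) : (p.+1 %| N)%N ->
  (#|[set n : 'I_N | inZp n \in B]| <= (N %/ p.+1) * #|B|)%N.
Proof.
move=> dvdN.
have quo_lt (n : 'I_N) : (n %/ p.+1 < N %/ p.+1)%N.
  by rewrite ltn_divRL // (leq_ltn_trans (leq_divM _ _)).
pose f (n : 'I_N) := (Ordinal (quo_lt n), inZp n : 'I_p.+1).
have f_inj : injective f.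
  move=> n1 n2 [q12 r12].
  by apply: val_inj; rewrite /= (divn_eq n1 p.+1) (divn_eq n2 p.+1) q12 r12.
rewrite -(card_imset _ f_inj) -[X in (_ <= X * _)%N]card_ord -cardsT -cardsX.
by apply/subset_leq_card/subsetP => y /imsetP [n]; rewrite !inE => nB ->.
Qed.

Lemma card_shifts_notin (V : finZmodType) (A : {set V}) (i : V) :
  #|[set b | i - b \notin A]| = (#|V| - #|A|)%N.
Proof.
have -> : [set b | i - b \notin A] = (fun b => i - b) @^-1: ~: A.
  by apply/setP => b; rewrite !inE.
rewrite card_preimset; last by move=> b1 b2 /addrI /oppr_inj.
by rewrite cardsCs setCK.
Qed.

Theorem theorem1 (R : realFieldType) (M K P N : nat)
  (hM : (0 < M)%N) (hK : (0 < K)%N) (hP : (0 < P)%N) (hN : (0 < N)%N)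
  (hMK : (M < K)%N) (hKP : (K <= P)%N) (hPN : (P %| N)%N)
  (a : 'I_M -> 'rV[R]_N) :
  exists F : 'M[R]_(P, N),
    (forall chi : {set 'I_P}, #|chi| = K ->
       forall m : 'I_M, in_row_span F chi (a m)) /\
    (forall i : 'I_P, (sparsity (row i F) <= (N %/ P) * (P - K + M))%N).
Proof.
have [p defP] : exists p, P = p.+1 by exists P.-1; rewrite prednK.
subst P.
have hc : (K - M <= p.+1)%N by lia.
pose A := [set widen_ord hc j | j in 'I_(K - M)].
have cardA : #|A| = (K - M)%N.
  by rewrite card_imset ?card_ord // => j k /(congr1 val) /= jk; apply: val_inj.
pose w (k : 'I_p.+1 + 'I_M) : R := (unsplit k : nat)%:R.
have w_inj : injective w.
  by move=> k l /eqP; rewrite eqr_nat => /eqP /val_inj /(can_inj unsplitK).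
pose T (n : 'I_N) := (fun i => i - inZp n) @^-1: A.
exists (masked_code w T a); split.
- move=> chi chiK m; apply: in_row_span_masked_code => // n.
  by rewrite chiK card_preimset ?cardA ?subnK ?(ltnW hMK) // => i j /addIr.
- move=> i; rewrite /sparsity.
  have cardB : #|[set b | i - b \notin A]| = (p.+1 - K + M)%N.
    by rewrite card_shifts_notin card_ord cardA; lia.
  rewrite -cardB; apply: leq_trans (leq_card_residues_in _ hPN).
  apply/subset_leq_card/subsetP => n; rewrite !inE mxE; apply: contraNN => iT.
  by rewrite masked_code_zero ?inE.
Qed.
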